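(* Let $\mathcal X\subseteq[-1,1]^n$ and let $f:\mathcal X\to\{\pm1\}$ be a $(K,M)$-PTF. Then $f$ is a $(K,2M,B,\xi)$-PTF for $\xi=\frac1{2(n+1)^{\frac{K+1}2}KM}$ and $B=2(n+1)^{K/2}M$.
   Context: $\|p\|_{\mathrm{co}}$ denotes the Euclidean norm of the coefficient vector of a polynomial $p$. $f:\mathcal X\to\{\pm1\}$ is a $(K,M)$-PTF if there is a polynomial $p:\mathbb R^n\to\mathbb R$ of degree $\le K$ with $\|p\|_{\mathrm{co}}\le M$ and $p(\mathbf x)f(\mathbf x)\ge1$ for all $\mathbf x\in\mathcal X$. With $\mathcal B_r(\mathbf x)=\{\tilde{\mathbf x}\in[-1,1]^n:\|\mathbf x-\tilde{\mathbf x}\|_\infty\le r\}$, $f$ is a $(K,M,B,\xi)$-PTF if there is such a polynomial $p$ (degree $\le K$, $\|p\|_{\mathrm{co}}\le M$) with $B\ge p(\tilde{\mathbf x})f(\mathbf x)\ge1$ for all $\mathbf x\in\mathcal X$ and $\tilde{\mathbf x}\in\mathcal B_\xi(\mathbf x)$. *)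

From mathcomp Require Import all_boot all_order all_algebra.
From mathcomp Require Import mpoly.
Set Implicit Arguments. Unset Strict Implicit. Unset Printing Implicit Defensive.
Import Order.TTheory GRing.Theory Num.Theory.
Local Open Scope ring_scope.

Definition conorm (R : rcfType) (n : nat) (p : {mpoly R[n]}) : R :=
  Num.sqrt (\sum_(m <- msupp p) (p@_m) ^+ 2).

(* degree of p is at most K  (msize p = 1 + deg p, and 0 for p = 0) *)
Definition deg_le (R : rcfType) (n : nat) (p : {mpoly R[n]}) (K : nat) : Prop :=
  (msize p <= K.+1)%N.

Definition in_cube (R : rcfType) (n : nat) (x : 'I_n -> R) : Prop :=
  forall i, -1 <= x i <= 1.

Definition ball_inf (R : rcfType) (n : nat) (r : R) (x xt : 'I_n -> R) : Prop :=
  in_cube xt /\ forall i, `|x i - xt i| <= r.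

Definition PTF (R : rcfType) (n : nat) (X : ('I_n -> R) -> Prop)
    (f : ('I_n -> R) -> R) (K : nat) (M : R) : Prop :=
  exists p : {mpoly R[n]},
    deg_le p K /\ conorm p <= M /\
    forall x, X x -> 1 <= p.@[x] * f x.

Definition robust_PTF (R : rcfType) (n : nat) (X : ('I_n -> R) -> Prop)
    (f : ('I_n -> R) -> R) (K : nat) (M B xi : R) : Prop :=
  exists p : {mpoly R[n]},
    deg_le p K /\ conorm p <= M /\
    forall x xt, X x -> ball_inf xi x xt ->
      1 <= p.@[xt] * f x /\ p.@[xt] * f x <= B.

(* A polynomial p of degree at most K has at most (n+1)^K monomials, so by
   Cauchy-Schwarz the l1 norm S of its coefficients is at most
   sqrt((n+1)^K) ||p||_co <= sqrt((n+1)^K) M.  On the cube each monomial is a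
   product of at most K factors of modulus at most 1, hence bounded by 1 and
   K-Lipschitz for the sup norm.  Thus |p| <= S there, and moving a point by at
   most xi changes p by at most K xi S <= 1/2; so 2p keeps margin 1 on the
   xi-balls around X and is bounded by 2S. *)

From mathcomp Require Import all_boot all_order all_algebra.
From mathcomp Require Import mpoly.
From mathcomp Require Import ring lra.
Set Implicit Arguments. Unset Strict Implicit. Unset Printing Implicit Defensive.
Import Order.TTheory GRing.Theory Num.Theory.
Local Open Scope ring_scope.

Lemma sumr_const_seq (V : nmodType) (I : Type) (r : seq I) (x : V) :
  \sum_(i <- r) x = x *+ size r.
Proof. by rewrite big_const_seq count_predT iter_addr_0. Qed.

Lemma sqr_sum_le (R : realFieldType) (I : Type) (r : seq I) (a : I -> R) :
  (\sum_(i <- r) a i) ^+ 2 <= (size r)%:R * \sum_(i <- r) a i ^+ 2.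
Proof.
have -> : (\sum_(i <- r) a i) ^+ 2 = \sum_(i <- r) \sum_(j <- r) a i * a j.
  by rewrite expr2 mulr_suml; apply: eq_bigr => i _; rewrite mulr_sumr.
have sum_amgm : \sum_(i <- r) \sum_(j <- r) (a i ^+ 2 + a j ^+ 2) / 2 =
    (size r)%:R * \sum_(i <- r) a i ^+ 2.
  under eq_bigr => i _ do rewrite -mulr_suml big_split /= sumr_const_seq.
  rewrite -mulr_suml big_split /= sumrMnl sumr_const_seq [RHS]mulr_natl.
  by set s := _ *+ size r; field.
rewrite -sum_amgm; apply: ler_sum => i _; apply: ler_sum => j _.
by have := sqr_ge0 (a i - a j); rewrite !expr2; lra.
Qed.

Lemma norm_prodB_le (R : numDomainType) (I : Type) (r : seq I) (a b : I -> R) :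
  (forall i, `|a i| <= 1) -> (forall i, `|b i| <= 1) ->
  `|\prod_(i <- r) a i - \prod_(i <- r) b i| <= \sum_(i <- r) `|a i - b i|.
Proof.
move=> a1 b1; elim: r => [|i r IHr]; first by rewrite !big_nil subrr normr0.
have prod_a1 : `|\prod_(j <- r) a j| <= 1.
  by rewrite normr_prod; apply: prodr_ile1 => j _; rewrite normr_ge0 a1.
rewrite !big_cons.
have -> : a i * \prod_(j <- r) a j - b i * \prod_(j <- r) b j =
  (a i - b i) * \prod_(j <- r) a j + b i * (\prod_(j <- r) a j - \prod_(j <- r) b j).
  by ring.
apply: le_trans (ler_normD _ _) _; rewrite !normrM; apply: lerD.
- by rewrite -[leRHS]mulr1 ler_wpM2l.
- by rewrite -[leRHS]mul1r ler_pM.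
Qed.

Lemma norm_exprB_le (R : numDomainType) (x y : R) (k : nat) :
  `|x| <= 1 -> `|y| <= 1 -> `|x ^+ k - y ^+ k| <= k%:R * `|x - y|.
Proof.
move=> x1 y1; rewrite -[k in x ^+ k](card_ord k) -[k in y ^+ k](card_ord k).
rewrite -!prodr_const.
apply: le_trans (norm_prodB_le _ (fun=> x1) (fun=> y1)) _.
by rewrite sumr_const card_ord mulr_natl.
Qed.

Lemma norm_monomialB_le (R : numDomainType) (n : nat) (x y : 'I_n -> R)
    (m : 'X_{1..n}) (r : R) :
  (forall i, `|x i| <= 1) -> (forall i, `|y i| <= 1) ->
  (forall i, `|x i - y i| <= r) ->
  `|\prod_i x i ^+ m i - \prod_i y i ^+ m i| <= (mdeg m)%:R * r.
Proof.
move=> x1 y1 xy.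
have Xle1 (z : 'I_n -> R) : (forall i, `|z i| <= 1) -> forall i, `|z i ^+ m i| <= 1.
  by move=> z1 i; rewrite normrX exprn_ile1.
apply: le_trans (norm_prodB_le _ (Xle1 _ x1) (Xle1 _ y1)) _.
rewrite mdegE natr_sum mulr_suml; apply: ler_sum => i _.
apply: le_trans (norm_exprB_le _ (x1 i) (y1 i)) _.
by rewrite ler_wpM2l.
Qed.

(* The letter [ord_max] is a blank, so that words of length K cover all
   monomials of degree at most K. *)
Definition mnm_of_seq (n : nat) (s : seq 'I_n.+1) : 'X_{1..n} :=
  [multinom count_mem (widen_ord (leqnSn n) i) s | i < n].

Lemma mnm_of_seq_surj (n K : nat) (m : 'X_{1..n}) :
  (mdeg m <= K)%N -> exists2 s : seq 'I_n.+1, size s = K & mnm_of_seq s = m.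
Proof.
elim: K m => [|K IHK] m degm.
  have /eqP -> : m == 0%MM by rewrite -mdeg_eq0 -leqn0.
  by exists [::] => //; apply/mnmP => i; rewrite mnmE mnm0E.
have [degmK|] := leqP (mdeg m) K.
  have [s sizes <-] := IHK m degmK.
  exists (ord_max :: s); first by rewrite /= sizes.
  apply/mnmP => i; rewrite !mnmE /= eq_sym.
  have -> // : (widen_ord (leqnSn n) i == ord_max) = false.
  by apply/negbTE; rewrite -val_eqE /= neq_ltn ltn_ord.
move=> degmK; have /existsP [i mi0] : [exists i, 0 < m i]%N.
  apply: contraTT degmK => /existsPn m0; rewrite -leqNgt mdegE big1 // => j _.
  by apply/eqP; rewrite -leqn0 leqNgt m0.
pose m' := [multinom (m j - (i == j))%N | j < n].
have m_eq : m = (m' + U_(i))%MM.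
  apply/mnmP => j; rewrite mnmDE mnm1E mnmE.
  by case: eqP => [<-|_]; [rewrite subnK | rewrite subn0 addn0].
have degm' : (mdeg m' <= K)%N.
  by move: degm; rewrite m_eq mdegD mdeg1 addn1.
have [s sizes sm'] := IHK m' degm'.
exists (widen_ord (leqnSn n) i :: s); first by rewrite /= sizes.
by rewrite m_eq -sm'; apply/mnmP => j; rewrite mnmDE mnm1E !mnmE /= addnC.
Qed.

Lemma size_msupp_le (R : nzRingType) (n K : nat) (p : {mpoly R[n]}) :
  (msize p <= K.+1)%N -> (size (msupp p) <= n.+1 ^ K)%N.
Proof.
move=> sizep; pose words := [seq mnm_of_seq (val t) | t <- enum {: K.-tuple 'I_n.+1}].
have -> : (n.+1 ^ K = size words)%N.
  by rewrite size_map -cardE card_tuple card_ord.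
apply: uniq_leq_size (msupp_uniq p) _ => m /msize_mdeg_lt mp.
have [s /eqP sizes <-] := @mnm_of_seq_surj n K m (leq_trans mp sizep).
by apply/mapP; exists (Tuple sizes); rewrite ?mem_enum.
Qed.

Definition l1_conorm (R : numDomainType) (n : nat) (p : {mpoly R[n]}) : R :=
  \sum_(m <- msupp p) `|p@_m|.

Lemma l1_conorm_ge0 (R : numDomainType) (n : nat) (p : {mpoly R[n]}) :
  0 <= l1_conorm p.
Proof. by apply: sumr_ge0 => m _. Qed.

Lemma l1_conorm_le_conorm (R : rcfType) (n : nat) (p : {mpoly R[n]}) :
  l1_conorm p <= Num.sqrt (size (msupp p))%:R * conorm p.
Proof.
rewrite -[l1_conorm p]ger0_norm ?l1_conorm_ge0 // -sqrtr_sqr -sqrtrM //.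
rewrite ler_sqrt ?mulr_ge0 ?sumr_ge0 // => [|m _]; last exact: sqr_ge0.
apply: le_trans (sqr_sum_le _ _) _.
by rewrite ler_wpM2l //; apply: ler_sum => m _; rewrite real_normK ?num_real.
Qed.

Lemma l1_conorm_le (R : rcfType) (n K : nat) (p : {mpoly R[n]}) :
  deg_le p K -> l1_conorm p <= Num.sqrt ((n.+1)%:R ^+ K) * conorm p.
Proof.
move=> degp; apply: le_trans (l1_conorm_le_conorm p) _.
apply: ler_wpM2r; first exact: sqrtr_ge0.
by rewrite ler_sqrt ?exprn_ge0 // -natrX ler_nat size_msupp_le.
Qed.

Lemma in_cube_norm (R : rcfType) (n : nat) (x : 'I_n -> R) :
  in_cube x -> forall i, `|x i| <= 1.
Proof. by move=> cubex i; rewrite ler_norml cubex. Qed.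

Lemma norm_meval_le (R : rcfType) (n : nat) (p : {mpoly R[n]}) (x : 'I_n -> R) :
  in_cube x -> `|p.@[x]| <= l1_conorm p.
Proof.
move=> /in_cube_norm x1; rewrite mevalE; apply: le_trans (ler_norm_sum _ _ _) _.
apply: ler_sum => m _; rewrite normrM -[leRHS]mulr1 ler_wpM2l //.
by rewrite normr_prod; apply: prodr_ile1 => i _; rewrite normr_ge0 normrX exprn_ile1.
Qed.

Lemma norm_mevalB_le (R : rcfType) (n K : nat) (p : {mpoly R[n]})
    (x y : 'I_n -> R) (r : R) :
  deg_le p K -> in_cube x -> in_cube y -> 0 <= r ->
  (forall i, `|x i - y i| <= r) ->
  `|p.@[x] - p.@[y]| <= K%:R * r * l1_conorm p.
Proof.
move=> degp /in_cube_norm x1 /in_cube_norm y1 r0 xy.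
rewrite !mevalE -sumrB; apply: le_trans (ler_norm_sum _ _ _) _.
rewrite /l1_conorm mulr_sumr !big_seq; apply: ler_sum => m /msize_mdeg_lt mp.
rewrite -mulrBr normrM mulrC ler_wpM2r //.
apply: le_trans (norm_monomialB_le m x1 y1 xy) _.
by rewrite ler_wpM2r // ler_nat -ltnS (leq_trans mp).
Qed.

Lemma conormZ (R : rcfType) (n : nat) (c : R) (p : {mpoly R[n]}) :
  conorm (c *: p) = `|c| * conorm p.
Proof.
have [->|c0] := eqVneq c 0.
  by rewrite scale0r /conorm msupp0 big_nil sqrtr0 normr0 mul0r.
rewrite /conorm (perm_big _ (msuppZ _ c0)) /=.
under eq_bigr => m _ do rewrite mcoeffZ exprMn.
by rewrite -mulr_sumr sqrtrM ?sqr_ge0 // sqrtr_sqr.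
Qed.

Lemma robust_radius_margin (R : rcfType) (n K : nat) (M : R) : 0 <= M ->
  K%:R * (1 / (2 * Num.sqrt ((n.+1)%:R ^+ K.+1) * K%:R * M))
    * (Num.sqrt ((n.+1)%:R ^+ K) * M) <= 1 / 2.
Proof.
move=> M0; set a := Num.sqrt ((n.+1)%:R ^+ K); pose s := Num.sqrt (n.+1)%:R : R.
have -> : Num.sqrt ((n.+1)%:R ^+ K.+1) = a * s by rewrite exprSr sqrtrM ?exprn_ge0.
have a0 : 0 < a by rewrite sqrtr_gt0 exprn_gt0.
have s1 : 1 <= s by rewrite -sqrtr1 ler_sqrt ?ler1n.
have [KM0|] := eqVneq (K%:R * M) 0.
  (* the radius is then 1 / 0 = 0 *)
  by rewrite -(mulrA (2 * (a * s))) KM0 mulr0 invr0 !mulr0 mul0r; lra.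
rewrite mulf_eq0 negb_or => /andP[K0 Mn0].
have s0 : 0 < s by apply: lt_le_trans s1.
have -> : K%:R * (1 / (2 * (a * s) * K%:R * M)) * (a * M) = 1 / (2 * s).
  by field; rewrite ?K0 ?Mn0 ?(gt_eqF a0) ?(gt_eqF s0).
by rewrite ler_pdivrMr ?mulr_gt0 //; lra.
Qed.

Lemma scaled_sign_margin (R : realFieldType) (u v S b : R) :
  b = 1 \/ b = -1 -> 1 <= v * b -> `|u - v| <= 1 / 2 -> `|u| <= S ->
  1 <= 2 * u * b /\ 2 * u * b <= 2 * S.
Proof. by case=> -> vb; rewrite !ler_norml => /andP[? ?] /andP[? ?]; split; lra. Qed.

Theorem lemma14 (R : rcfType) (n K : nat) (M : R)
    (X : ('I_n -> R) -> Prop) (f : ('I_n -> R) -> R) :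
  (forall x, X x -> in_cube x) ->
  (forall x, X x -> f x = 1 \/ f x = -1) ->
  PTF X f K M ->
  robust_PTF X f K (2 * M)
    (2 * Num.sqrt ((n.+1)%:R ^+ K) * M)
    (1 / (2 * Num.sqrt ((n.+1)%:R ^+ K.+1) * K%:R * M)).
Proof.
move=> cubeX signf [p [degp [normp marginp]]].
have M0 : 0 <= M by apply: le_trans normp; apply: sqrtr_ge0.
set xi := 1 / _; have xi0 : 0 <= xi by rewrite divr_ge0 ?mulr_ge0 ?sqrtr_ge0.
have l1p : l1_conorm p <= Num.sqrt ((n.+1)%:R ^+ K) * M.
  by apply: le_trans (l1_conorm_le degp) _; rewrite ler_wpM2l ?sqrtr_ge0.
exists (2 *: p); split; [exact: leq_trans (msizeZ_le _ _) degp | split].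
  by rewrite conormZ ger0_norm // ler_wpM2l.
move=> x xt Xx [cubext near]; rewrite mevalZ -mulrA.
apply: scaled_sign_margin (signf x Xx) (marginp x Xx) _ _; last first.
  exact: le_trans (norm_meval_le p cubext) l1p.
have xt_near i : `|xt i - x i| <= xi by rewrite distrC.
apply: le_trans (norm_mevalB_le degp cubext (cubeX x Xx) xi0 xt_near) _.
apply: le_trans (robust_radius_margin n K M0).
by rewrite ler_wpM2l // mulr_ge0.
Qed.
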